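(* The identity functor of $\mathrm{Gaunt}_n$ has exactly one natural endo-transformation, namely the identity transformation: if $\eta\colon\mathrm{id}\Rightarrow\mathrm{id}$ is a natural transformation of endofunctors of $\mathrm{Gaunt}_n$, then $\eta_X=\mathrm{id}_X$ for every gaunt $n$-category $X$.
   Context: A strict $0$-category is a set; a strict $n$-category is a category enriched in strict $(n-1)$-categories. A strict $n$-category is gaunt if for every $1\le k\le n$ its only invertible $k$-morphisms are identities; $\mathrm{Gaunt}_n$ is the category of small gaunt $n$-categories and strict functors. *)

(* Strict n-categories, defined recursively by enrichment, as in the paper:
   a strict 0-category is a set (a Type); a strict (n+1)-category is a
   category enriched in strict n-categories.  Since the enrichment requires
   the notions of (bi)functor between strict n-categories, we build, by
   recursion on n, a record [Level] packaging for strict n-categories: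
   - the type of strict n-categories,
   - their k-cells (k-morphisms) for every k (cells of dimension > n are
     identity cells),
   - strict bifunctors A x B -> C and their action on cells,
   - strict functors A -> B and their action on cells,
   - identity cells,
   - gauntness.
   Equalities of (bi)functors (used in the enriched-category and functor
   axioms) are written out elementwise on cells of every dimension: a strict
   functor is determined by its action on cells. *)

Record Level := {
  cat : Type;
  cells : cat -> nat -> Type;
  bif : cat -> cat -> cat -> Type;
  bapp : forall A B C, bif A B C -> forall k, cells A k -> cells B k -> cells C k;
  fn : cat -> cat -> Type;
  fapp : forall A B, fn A B -> forall k, cells A k -> cells B k;
  idc : forall A k, cells A k -> cells A (S k);
  gaunt : cat -> Prop
}.

Arguments bapp {l A B C}.
Arguments fapp {l A B}.
Arguments idc {l A}.

Fixpoint iterid (L : Level) (H : cat L) (a : cells L H 0) (k : nat) : cells L H k :=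
  match k with
  | 0 => a
  | S j => idc j (iterid L H a j)
  end.
Arguments iterid {L H}.

Definition L0 : Level := {|
  cat := Type;
  cells := fun X _ => X;
  bif := fun A B C => A -> B -> C;
  bapp := fun A B C f _ a b => f a b;
  fn := fun A B => A -> B;
  fapp := fun A B f _ a => f a;
  idc := fun A _ a => a;
  gaunt := fun _ => True
|}.

Section Succ.
Variable L : Level.

Record SCat := {
  obj : Type;
  hom : obj -> obj -> cat L;
  comp : forall x y z, bif L (hom y z) (hom x y) (hom x z);
  ident : forall x, cells L (hom x x) 0;
  comp_assoc : forall w x y z k (h : cells L (hom y z) k) (g : cells L (hom x y) k)
      (f : cells L (hom w x) k),
      bapp (comp w x z) k (bapp (comp x y z) k h g) f
      = bapp (comp w y z) k h (bapp (comp w x y) k g f);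
  comp_lunit : forall x y k (f : cells L (hom x y) k),
      bapp (comp x y y) k (iterid (ident y) k) f = f;
  comp_runit : forall x y k (f : cells L (hom x y) k),
      bapp (comp x x y) k f (iterid (ident x) k) = f
}.

Definition scells (C : SCat) (k : nat) : Type :=
  match k with
  | 0 => obj C
  | S j => { x : obj C & { y : obj C & cells L (hom C x y) j } }
  end.

Record SBif (A B C : SCat) := {
  bo : obj A -> obj B -> obj C;
  bh : forall a a' b b', bif L (hom A a a') (hom B b b') (hom C (bo a b) (bo a' b'));
  bh_comp : forall a a' a'' b b' b'' k
      (f2 : cells L (hom A a' a'') k) (f1 : cells L (hom A a a') k)
      (g2 : cells L (hom B b' b'') k) (g1 : cells L (hom B b b') k),
      bapp (bh a a'' b b'') k (bapp (comp A a a' a'') k f2 f1) (bapp (comp B b b' b'') k g2 g1)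
      = bapp (comp C _ _ _) k (bapp (bh a' a'' b' b'') k f2 g2) (bapp (bh a a' b b') k f1 g1);
  bh_id : forall a b, bapp (bh a a b b) 0 (ident A a) (ident B b) = ident C (bo a b)
}.

Arguments bo {A B C}.
Arguments bh {A B C}.

Definition sbapp (A B C : SCat) (F : SBif A B C) (k : nat) :
    scells A k -> scells B k -> scells C k :=
  match k return scells A k -> scells B k -> scells C k with
  | 0 => fun a b => bo F a b
  | S j => fun u v =>
      existT _ (bo F (projT1 u) (projT1 v))
        (existT _ (bo F (projT1 (projT2 u)) (projT1 (projT2 v)))
           (bapp (bh F _ _ _ _) j (projT2 (projT2 u)) (projT2 (projT2 v))))
  end.

Record SFun (A B : SCat) := {
  fo : obj A -> obj B;
  fh : forall x y, fn L (hom A x y) (hom B (fo x) (fo y));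
  fh_comp : forall x y z k (g : cells L (hom A y z) k) (f : cells L (hom A x y) k),
      fapp (fh x z) k (bapp (comp A x y z) k g f)
      = bapp (comp B _ _ _) k (fapp (fh y z) k g) (fapp (fh x y) k f);
  fh_id : forall x, fapp (fh x x) 0 (ident A x) = ident B (fo x)
}.

Arguments fo {A B}.
Arguments fh {A B}.

Definition sfapp (A B : SCat) (F : SFun A B) (k : nat) : scells A k -> scells B k :=
  match k return scells A k -> scells B k with
  | 0 => fun a => fo F a
  | S j => fun u =>
      existT _ (fo F (projT1 u))
        (existT _ (fo F (projT1 (projT2 u))) (fapp (fh F _ _) j (projT2 (projT2 u))))
  end.

Definition sidc (C : SCat) (k : nat) : scells C k -> scells C (S k) :=
  match k return scells C k -> scells C (S k) with
  | 0 => fun x => existT _ x (existT _ x (ident C x))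
  | S j => fun u =>
      existT _ (projT1 u) (existT _ (projT1 (projT2 u)) (idc j (projT2 (projT2 u))))
  end.

Definition invertible1 (C : SCat) (x y : obj C) (f : cells L (hom C x y) 0) : Prop :=
  exists g : cells L (hom C y x) 0,
    bapp (comp C x y x) 0 g f = ident C x /\ bapp (comp C y x y) 0 f g = ident C y.

Arguments invertible1 {C x y}.

(* Gaunt: invertible 1-morphisms are identities, and (recursively) each
   hom-category is gaunt, i.e. invertible k-morphisms (k >= 2), which are the
   invertible (k-1)-morphisms of the hom-categories, are identities. *)
Definition sgaunt (C : SCat) : Prop :=
  (forall (x y : obj C) (f : cells L (hom C x y) 0),
      invertible1 f ->
      (existT _ x (existT _ y f) : scells C 1) = sidc C 0 x)
  /\ (forall x y : obj C, gaunt L (hom C x y)).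

Definition succ : Level := {|
  cat := SCat;
  cells := scells;
  bif := SBif;
  bapp := sbapp;
  fn := SFun;
  fapp := sfapp;
  idc := sidc;
  gaunt := sgaunt
|}.

End Succ.

Fixpoint level (n : nat) : Level :=
  match n with
  | 0 => L0
  | S m => succ (level m)
  end.

Definition nCat (n : nat) : Type := cat (level n).
Definition nCells {n : nat} (X : nCat n) (k : nat) : Type := cells (level n) X k.
Definition nFun {n : nat} (X Y : nCat n) : Type := fn (level n) X Y.
Definition nfapp {n : nat} {X Y : nCat n} (F : nFun X Y) (k : nat) :
  nCells X k -> nCells Y k := @fapp (level n) X Y F k.
Definition is_gaunt {n : nat} (X : nCat n) : Prop := gaunt (level n) X.

Definition GauntCat (n : nat) : Type := { X : nCat n | is_gaunt X }.

From Stdlib Require Import Eqdep_dec Bool.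

(* For n = 0, naturality against the constant map at c gives eta(c) = c.
   For n = m+1, naturality against the functor 1 -> X picking an object x
   shows that eta fixes objects.  For a gaunt m-category A let Σ A be its
   suspension: objects true, false, with (Σ A)(true, false) = A,
   (Σ A)(false, true) empty and terminal endo-hom-categories; it is gaunt.
   Since eta fixes both objects of Σ A, it restricts to an endofunctor of A,
   natural in A (via Σ F); by induction this restriction is the identity.
   Finally, a k+1-cell c of X in X(x,y) is the image of the corresponding cell
   of Σ X(x,y) under the functor Σ X(x,y) -> X classifying the hom x -> y,
   so naturality against that functor gives eta(c) = c. *)

Record Terminal (L : Level) := {
  term : cat L;
  term_comp : bif L term term term;
  term_pt : cells L term 0;
  term_cells_eq : forall k (a b : cells L term k), a = b;
  term_gaunt : gaunt L term
}.
Arguments term {L}.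
Arguments term_comp {L}.
Arguments term_pt {L}.
Arguments term_cells_eq {L}.
Arguments term_gaunt {L}.

Record Toolkit (L : Level) := {
  tk_term : Terminal L;
  tk_empty : cat L;
  tk_empty_cells : forall k, cells L tk_empty k -> False;
  tk_empty_gaunt : gaunt L tk_empty;
  tk_empty_bif_l : forall B C, bif L tk_empty B C;
  tk_empty_bif_r : forall A C, bif L A tk_empty C;
  tk_empty_fun : forall B, fn L tk_empty B;
  tk_proj_l : forall A, bif L A (term tk_term) A;
  tk_proj_l_spec : forall A k f t, bapp (tk_proj_l A) k f t = f;
  tk_proj_r : forall A, bif L (term tk_term) A A;
  tk_proj_r_spec : forall A k t f, bapp (tk_proj_r A) k t f = f;
  tk_id : forall A, fn L A A;
  tk_id_spec : forall A k c, fapp (tk_id A) k c = c;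
  tk_const : forall A, cells L A 0 -> fn L (term tk_term) A;
  tk_const_spec : forall A a k t, fapp (tk_const A a) k t = iterid a k
}.
Arguments tk_term {L}.
Arguments tk_empty {L}.
Arguments tk_empty_cells {L}.
Arguments tk_empty_gaunt {L}.
Arguments tk_empty_bif_l {L}.
Arguments tk_empty_bif_r {L}.
Arguments tk_empty_fun {L}.
Arguments tk_proj_l {L}.
Arguments tk_proj_l_spec {L}.
Arguments tk_proj_r {L}.
Arguments tk_proj_r_spec {L}.
Arguments tk_id {L}.
Arguments tk_id_spec {L}.
Arguments tk_const {L}.
Arguments tk_const_spec {L}.

Lemma iterid_level0 (X : cat L0) (a : cells L0 X 0) (k : nat) : @iterid L0 X a k = a.
Proof. induction k as [|k IH]; simpl; auto. Qed.

Definition terminal0 : Terminal L0 :=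
  @Build_Terminal L0 unit (fun _ _ => tt) tt
    (fun _ a b => match a, b with tt, tt => eq_refl end) I.

Definition toolkit0 : Toolkit L0.
Proof.
  refine {| tk_term := terminal0;
            tk_empty := (Empty_set : Type);
            tk_empty_gaunt := I;
            tk_proj_l := fun A (a : A) (_ : unit) => a;
            tk_proj_r := fun A (_ : unit) (a : A) => a;
            tk_id := fun A (a : A) => a;
            tk_const := fun A (a : A) (_ : unit) => a |};
    simpl; try reflexivity.
  - intros _ [].
  - intros B C [].
  - intros A C _ [].
  - intros B [].
  - intros A a k _. symmetry. apply iterid_level0.
Defined.

Lemma iterid_succ (L : Level) (C : SCat L) (x : obj L C) (j : nat) :
  @iterid (succ L) C x (S j) = existT _ x (existT _ x (iterid (ident L C x) j)).
Proof.
  induction j as [|j IH]; [reflexivity|].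
  change (@iterid (succ L) C x (S (S j))) with (sidc L C (S j) (@iterid (succ L) C x (S j))).
  rewrite IH. reflexivity.
Qed.

Section SuccessorToolkit.
Variable L : Level.
Variable K : Toolkit L.
Local Notation T := (tk_term K).

Definition point_scat : SCat L.
Proof.
  refine {| obj := unit; hom := fun _ _ => term T; comp := fun _ _ _ => term_comp T;
            ident := fun _ => term_pt T |};
    intros; apply term_cells_eq.
Defined.

Definition point_comp : SBif L point_scat point_scat point_scat.
Proof.
  refine (@Build_SBif L point_scat point_scat point_scat
            (fun _ _ => tt) (fun _ _ _ _ => term_comp T) _ _);
    intros; apply term_cells_eq.
Defined.

Lemma point_cells_eq (k : nat) (a b : scells L point_scat k) : a = b.
Proof.
  destruct k as [|k]; simpl in *.
  - destruct a, b; reflexivity.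
  - destruct a as [[] [[] a]], b as [[] [[] b]].
    rewrite (term_cells_eq T k a b). reflexivity.
Qed.

Lemma point_gaunt : sgaunt L point_scat.
Proof.
  split.
  - intros x y f _. destruct x, y. simpl.
    rewrite (term_cells_eq T 0 f (term_pt T)). reflexivity.
  - intros x y. apply term_gaunt.
Qed.

Definition succ_terminal : Terminal (succ L) :=
  @Build_Terminal (succ L) point_scat point_comp (tt : scells L point_scat 0)
    point_cells_eq point_gaunt.

Definition empty_scat : SCat L.
Proof.
  refine {| obj := Empty_set; hom := fun x _ => match x with end;
            comp := fun x _ _ => match x with end; ident := fun x => match x with end |};
    intros [].
Defined.

Lemma empty_scells (k : nat) : scells L empty_scat k -> False.
Proof. destruct k as [|k]; simpl; [intros []|intros [[] _]]. Qed.

Lemma empty_sgaunt : sgaunt L empty_scat.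
Proof. split; intros []. Qed.

Definition empty_sbif_l (B C : SCat L) : SBif L empty_scat B C.
Proof.
  unshelve econstructor; simpl; intros;
    match goal with e : Empty_set |- _ => destruct e end.
Defined.

Definition empty_sbif_r (A C : SCat L) : SBif L A empty_scat C.
Proof.
  unshelve econstructor; simpl; intros;
    match goal with e : Empty_set |- _ => destruct e end.
Defined.

Definition empty_sfun (B : SCat L) : SFun L empty_scat B.
Proof.
  unshelve econstructor; simpl; intros;
    match goal with e : Empty_set |- _ => destruct e end.
Defined.

Definition succ_proj_l (A : SCat L) : SBif L A point_scat A.
Proof.
  refine (@Build_SBif L A point_scat A (fun a _ => a)
            (fun a a' _ _ => tk_proj_l K (hom L A a a')) _ _);
    intros; simpl; rewrite !tk_proj_l_spec; reflexivity.
Defined.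

Lemma succ_proj_l_spec (A : SCat L) (k : nat) (f : scells L A k) (t : scells L point_scat k) :
  sbapp L A point_scat A (succ_proj_l A) k f t = f.
Proof.
  destruct k as [|k]; [reflexivity|].
  destruct f as [x [y f]]. simpl. rewrite tk_proj_l_spec. reflexivity.
Qed.

Definition succ_proj_r (A : SCat L) : SBif L point_scat A A.
Proof.
  refine (@Build_SBif L point_scat A A (fun _ a => a)
            (fun _ _ a a' => tk_proj_r K (hom L A a a')) _ _);
    intros; simpl; rewrite !tk_proj_r_spec; reflexivity.
Defined.

Lemma succ_proj_r_spec (A : SCat L) (k : nat) (t : scells L point_scat k) (f : scells L A k) :
  sbapp L point_scat A A (succ_proj_r A) k t f = f.
Proof.
  destruct k as [|k]; [reflexivity|].
  destruct f as [x [y f]]. simpl. rewrite tk_proj_r_spec. reflexivity.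
Qed.

Definition succ_id (A : SCat L) : SFun L A A.
Proof.
  refine (@Build_SFun L A A (fun a => a) (fun a a' => tk_id K (hom L A a a')) _ _);
    intros; simpl; rewrite !tk_id_spec; reflexivity.
Defined.

Lemma succ_id_spec (A : SCat L) (k : nat) (c : scells L A k) : sfapp L A A (succ_id A) k c = c.
Proof.
  destruct k as [|k]; [reflexivity|].
  destruct c as [x [y c]]. simpl. rewrite tk_id_spec. reflexivity.
Qed.

Definition succ_const (A : SCat L) (x : obj L A) : SFun L point_scat A.
Proof.
  refine (@Build_SFun L point_scat A (fun _ => x)
            (fun _ _ => tk_const K (hom L A x x) (ident L A x)) _ _);
    intros; simpl; rewrite !tk_const_spec; [symmetry; apply comp_lunit | reflexivity].
Defined.

Lemma succ_const_spec (A : SCat L) (x : obj L A) (k : nat) (t : scells L point_scat k) :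
  sfapp L point_scat A (succ_const A x) k t = @iterid (succ L) A x k.
Proof.
  destruct k as [|k]; [reflexivity|].
  simpl. rewrite tk_const_spec. symmetry. apply iterid_succ.
Qed.

Definition succ_toolkit : Toolkit (succ L) :=
  {| tk_term := succ_terminal;
     tk_empty := empty_scat;
     tk_empty_cells := empty_scells;
     tk_empty_gaunt := empty_sgaunt;
     tk_empty_bif_l := empty_sbif_l;
     tk_empty_bif_r := empty_sbif_r;
     tk_empty_fun := empty_sfun;
     tk_proj_l := succ_proj_l;
     tk_proj_l_spec := succ_proj_l_spec;
     tk_proj_r := succ_proj_r;
     tk_proj_r_spec := succ_proj_r_spec;
     tk_id := succ_id;
     tk_id_spec := succ_id_spec;
     tk_const := succ_const;
     tk_const_spec := succ_const_spec |}.

End SuccessorToolkit.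

Fixpoint toolkit (n : nat) : Toolkit (level n) :=
  match n return Toolkit (level n) with
  | 0 => toolkit0
  | S m => succ_toolkit (level m) (toolkit m)
  end.

Section Suspension.
Variable L : Level.
Variable K : Toolkit L.
Local Notation T := (tk_term K).

Definition susp_hom (A : cat L) (x y : bool) : cat L :=
  match x, y with
  | true, true => term T
  | true, false => A
  | false, true => tk_empty K
  | false, false => term T
  end.

Definition susp_comp (A : cat L) (x y z : bool) :
    bif L (susp_hom A y z) (susp_hom A x y) (susp_hom A x z) :=
  match x, y, z return bif L (susp_hom A y z) (susp_hom A x y) (susp_hom A x z) with
  | true, true, true => term_comp T
  | true, true, false => tk_proj_l K A
  | true, false, true => tk_empty_bif_l K _ _
  | true, false, false => tk_proj_r K A
  | false, true, true => tk_empty_bif_r K _ _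
  | false, true, false => tk_empty_bif_r K _ _
  | false, false, true => tk_empty_bif_l K _ _
  | false, false, false => term_comp T
  end.

Definition susp_ident (A : cat L) (x : bool) : cells L (susp_hom A x x) 0 :=
  match x with true => term_pt T | false => term_pt T end.

(* Every equation between composites in the suspension is either vacuous
   (a cell of the empty category occurs), an equation between cells of the
   terminal category, or an instance of the projection equations. *)
Ltac susp_case :=
  first
  [ exfalso; match goal with c : _ |- _ => exact (tk_empty_cells K _ c) end
  | apply term_cells_eq
  | simpl; rewrite ?tk_proj_l_spec, ?tk_proj_r_spec, ?tk_id_spec; reflexivity ].

Definition susp (A : cat L) : SCat L.
Proof.
  refine (@Build_SCat L bool (susp_hom A) (susp_comp A) (susp_ident A) _ _ _).
  - intros w x y z k h g f; destruct w, x, y, z; susp_case.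
  - intros x y k f; destruct x, y; susp_case.
  - intros x y k f; destruct x, y; susp_case.
Defined.

(* Σ A is gaunt when A is: its only invertible 1-cells are identities, since
   there are no 1-cells false -> true, and its hom-categories are gaunt. *)
Lemma susp_gaunt (A : cat L) : gaunt L A -> sgaunt L (susp A).
Proof.
  intros HA. split.
  - intros x y f Hf. destruct x, y.
    + simpl in f |- *. rewrite (term_cells_eq T 0 f (term_pt T)). reflexivity.
    + exfalso. destruct Hf as [g _]. exact (tk_empty_cells K 0 g).
    + exfalso. exact (tk_empty_cells K 0 f).
    + simpl in f |- *. rewrite (term_cells_eq T 0 f (term_pt T)). reflexivity.
  - intros x y; destruct x, y; simpl; [apply term_gaunt | exact HA | apply tk_empty_gaunt | apply term_gaunt].
Qed.

Definition susp_map_hom (A B : cat L) (F : fn L A B) (x y : bool) :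
    fn L (susp_hom A x y) (susp_hom B x y) :=
  match x, y return fn L (susp_hom A x y) (susp_hom B x y) with
  | true, true => tk_id K _
  | true, false => F
  | false, true => tk_empty_fun K _
  | false, false => tk_id K _
  end.

Definition susp_map (A B : cat L) (F : fn L A B) : SFun L (susp A) (susp B).
Proof.
  refine (@Build_SFun L (susp A) (susp B) (fun b => b) (susp_map_hom A B F) _ _).
  - intros x y z k g f; destruct x, y, z; susp_case.
  - intros x; destruct x; apply term_cells_eq.
Defined.

Definition susp_cell (A : cat L) (k : nat) (c : cells L A k) : scells L (susp A) (S k) :=
  existT (fun x => {y : bool & cells L (susp_hom A x y) k}) true (existT _ false c).

Lemma susp_map_cell (A B : cat L) (F : fn L A B) (k : nat) (c : cells L A k) :
  @fapp (succ L) _ _ (susp_map A B F) (S k) (susp_cell A k c) = susp_cell B k (fapp F k c).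
Proof. reflexivity. Qed.

Lemma susp_cell_inj (A : cat L) (k : nat) (c d : cells L A k) :
  susp_cell A k c = susp_cell A k d -> c = d.
Proof.
  intros H. apply inj_pair2_eq_dec in H; [|exact bool_dec].
  apply inj_pair2_eq_dec in H; [|exact bool_dec]. exact H.
Qed.

(* For objects x, y of X, the functor Σ X(x,y) -> X sending true, false to
   x, y, acting as the identity on X(x,y) and picking identities on the
   endo-hom-categories: every cell of X of dimension >= 1 lies in its image. *)
Definition classify_obj (X : SCat L) (x y : obj L X) (b : bool) : obj L X :=
  if b then x else y.

Definition classify_hom (X : SCat L) (x y : obj L X) (b b' : bool) :
    fn L (susp_hom (hom L X x y) b b') (hom L X (classify_obj X x y b) (classify_obj X x y b')) :=
  match b, b' return fn L (susp_hom (hom L X x y) b b')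
                          (hom L X (classify_obj X x y b) (classify_obj X x y b')) with
  | true, true => tk_const K _ (ident L X x)
  | true, false => tk_id K _
  | false, true => tk_empty_fun K _
  | false, false => tk_const K _ (ident L X y)
  end.

Definition classify (X : SCat L) (x y : obj L X) : SFun L (susp (hom L X x y)) X.
Proof.
  refine (@Build_SFun L (susp (hom L X x y)) X (classify_obj X x y) (classify_hom X x y) _ _).
  - intros a b c k g f; destruct a, b, c; susp_case ||
      (simpl; rewrite ?tk_proj_l_spec, ?tk_proj_r_spec, ?tk_id_spec, ?tk_const_spec;
       first [symmetry; apply comp_lunit | symmetry; apply comp_runit]).
  - intros a; destruct a; simpl; rewrite tk_const_spec; reflexivity.
Defined.

Lemma classify_cell (X : SCat L) (x y : obj L X) (k : nat) (c : cells L (hom L X x y) k) :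
  @fapp (succ L) _ _ (classify X x y) (S k) (susp_cell (hom L X x y) k c)
  = existT (fun a => {b : obj L X & cells L (hom L X a b) k}) x (existT _ y c).
Proof. simpl. rewrite tk_id_spec. reflexivity. Qed.

End Suspension.

Definition transport_hom_fun (L : Level) (C : SCat L) (D : cat L) (u' v' u v : obj L C)
    (e1 : u' = u) (e2 : v' = v) (F : fn L D (hom L C u' v')) : fn L D (hom L C u v) :=
  match e1 in _ = u return fn L D (hom L C u v) with
  | eq_refl => match e2 in _ = v return fn L D (hom L C u' v) with eq_refl => F end
  end.

Lemma transport_hom_fun_cell (L : Level) (C : SCat L) (D : cat L) (u' v' u v : obj L C)
    (e1 : u' = u) (e2 : v' = v) (F : fn L D (hom L C u' v')) (k : nat) (c : cells L D k) :
  existT (fun x => {y : obj L C & cells L (hom L C x y) k}) u' (existT _ v' (fapp F k c))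
  = existT _ u (existT _ v (fapp (transport_hom_fun L C D u' v' u v e1 e2 F) k c)).
Proof. destruct e1, e2. reflexivity. Qed.

Definition natural_endo (n : nat) (eta : forall X : GauntCat n, nFun (proj1_sig X) (proj1_sig X))
  : Prop :=
  forall (X Y : GauntCat n) (F : nFun (proj1_sig X) (proj1_sig Y)) (k : nat)
    (c : nCells (proj1_sig X) k),
    nfapp F k (nfapp (eta X) k c) = nfapp (eta Y) k (nfapp F k c).

Definition identity_endo (n : nat) (eta : forall X : GauntCat n, nFun (proj1_sig X) (proj1_sig X))
  : Prop :=
  forall (X : GauntCat n) (k : nat) (c : nCells (proj1_sig X) k), nfapp (eta X) k c = c.

(* For sets, naturality with respect to the constant map at c forces eta(c) = c. *)
Lemma natural_endo_level0 (eta : forall X : GauntCat 0, nFun (proj1_sig X) (proj1_sig X)) :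
  natural_endo 0 eta -> identity_endo 0 eta.
Proof.
  intros eta_natural X k c. symmetry. exact (eta_natural X X (fun _ => c) k c).
Qed.

Section SuccessorLevel.
Variable m : nat.
Variable eta : forall X : GauntCat (S m), nFun (proj1_sig X) (proj1_sig X).
Hypothesis eta_natural : natural_endo (S m) eta.
Local Notation L := (level m).
Local Notation K := (toolkit m).

(* Naturality with respect to the functor 1 -> X picking x gives eta(x) = x. *)
Lemma eta_fixes_objects (X : GauntCat (S m)) (x : obj L (proj1_sig X)) :
  fo L _ _ (eta X) x = x.
Proof.
  set (T := tk_term (toolkit (S m))).
  pose (pt := exist (fun Y : nCat (S m) => is_gaunt Y) (term T) (term_gaunt T)).
  pose proof (eta_natural pt X (tk_const (toolkit (S m)) _ x) 0 (term_pt T)) as H.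
  unfold nfapp in H. rewrite !(tk_const_spec (toolkit (S m))) in H.
  exact (eq_sym H).
Qed.

Definition gsusp (A : GauntCat m) : GauntCat (S m) :=
  exist (fun X : nCat (S m) => is_gaunt X) (susp L K (proj1_sig A))
    (susp_gaunt L K (proj1_sig A) (proj2_sig A)).

(* eta on Σ A fixes both objects, hence restricts to an endofunctor of
   A = (Σ A)(true, false): this is the induced transformation one level down. *)
Definition eta_hom (A : GauntCat m) : nFun (proj1_sig A) (proj1_sig A) :=
  transport_hom_fun L (susp L K (proj1_sig A)) (proj1_sig A) _ _ true false
    (eta_fixes_objects (gsusp A) true) (eta_fixes_objects (gsusp A) false)
    (fh L _ _ (eta (gsusp A)) true false).

Lemma eta_hom_cell (A : GauntCat m) (k : nat) (c : nCells (proj1_sig A) k) :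
  @fapp (succ L) _ _ (eta (gsusp A)) (S k) (susp_cell L K _ k c)
  = susp_cell L K _ k (fapp (eta_hom A) k c).
Proof. apply transport_hom_fun_cell. Qed.

(* Naturality of eta against Σ F gives naturality of the restriction. *)
Lemma eta_hom_natural : natural_endo m eta_hom.
Proof.
  intros A B F k c.
  pose proof (eta_natural (gsusp A) (gsusp B) (susp_map L K _ _ F) (S k)
                (susp_cell L K _ k c)) as H.
  apply (susp_cell_inj L K _ k).
  unfold nfapp.
  rewrite <- (susp_map_cell L K _ _ F), <- !eta_hom_cell, <- (susp_map_cell L K _ _ F).
  exact H.
Qed.

(* If the restriction is the identity, naturality against classify shows that
   eta fixes every cell of dimension >= 1; objects are fixed already. *)
Lemma eta_identity_from_hom : identity_endo m eta_hom -> identity_endo (S m) eta.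
Proof.
  intros hom_id X [|k] c.
  - exact (eta_fixes_objects X c).
  - destruct c as [x [y c]].
    pose (A := exist (fun Y : nCat m => is_gaunt Y) (hom L (proj1_sig X) x y)
                 (proj2 (proj2_sig X) x y)).
    pose proof (eta_natural (gsusp A) X (classify L K (proj1_sig X) x y) (S k)
                  (susp_cell L K _ k c)) as H.
    unfold nfapp in H |- *.
    rewrite <- (classify_cell L K _ x y k c).
    etransitivity; [symmetry; exact H|].
    apply f_equal.
    rewrite eta_hom_cell.
    exact (f_equal (susp_cell L K _ k) (hom_id A k c)).
Qed.

End SuccessorLevel.

Theorem lemma4p1 (n : nat)
    (eta : forall X : GauntCat n, nFun (proj1_sig X) (proj1_sig X))
    (eta_natural : forall (X Y : GauntCat n) (F : nFun (proj1_sig X) (proj1_sig Y))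
        (k : nat) (c : nCells (proj1_sig X) k),
        nfapp F k (nfapp (eta X) k c) = nfapp (eta Y) k (nfapp F k c)) :
  forall (X : GauntCat n) (k : nat) (c : nCells (proj1_sig X) k),
    nfapp (eta X) k c = c.
Proof.
  revert eta eta_natural.
  induction n as [|m IH]; intros eta eta_natural.
  - exact (natural_endo_level0 eta eta_natural).
  - apply (eta_identity_from_hom m eta eta_natural).
    exact (IH _ (eta_hom_natural m eta eta_natural)).
Qed.
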